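(* Fix $\mu \in \mathcal{X}$ and let $P_X$ be a probability distribution on $\mathcal{X}$ with $P_X(\{ \mu \}) = 0$. Let $(\mu_n)$ be a sequence in $\mathcal{X}$ with $d(\mu_n, \mu) \to 0$. Then $D(\mu_n; P_X) \to D(\mu; P_X)$ as $n \to \infty$.
   Context: $(\mathcal{X}, d)$ is a complete separable metric space with its Borel $\sigma$-algebra. Define $h: \mathcal{X}^3 \to \mathbb{R}$ by $h(x_1, x_2, x_3) := \mathbb{I}( x_3 \notin \{x_1, x_2\} ) \dfrac{ d^2(x_1, x_3) + d^2(x_2, x_3) - d^2(x_1, x_2) }{d(x_1, x_3)\, d(x_2, x_3) }$, where $h := 0$ when $x_3 \in \{x_1,x_2\}$. The metric spatial depth of $\mu \in \mathcal{X}$ with respect to a probability distribution $P_X$ on $\mathcal{X}$ is $D(\mu; P_X) := 1 - \frac{1}{2} \mathrm{E} \{ h(X_1, X_2, \mu) \}$, where $X_1, X_2 \sim P_X$ are independent. *)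

From HB Require Import structures.
From mathcomp Require Import all_boot all_order all_algebra.
From mathcomp Require Import all_classical all_reals all_analysis.
Set Implicit Arguments. Unset Strict Implicit. Unset Printing Implicit Defensive.
Import Order.TTheory GRing.Theory Num.Theory.
Import numFieldNormedType.Exports.
Local Open Scope classical_set_scope.
Local Open Scope ring_scope.

Definition is_metric {R : realType} {T : Type} (d : T -> T -> R) : Prop :=
  [/\ forall x y, 0 <= d x y,
      forall x y, d x y = 0 <-> x = y,
      forall x y, d x y = d y x &
      forall x y z, d x z <= d x y + d y z].

Definition metric_complete {R : realType} {T : Type} (d : T -> T -> R) : Prop :=
  forall u : nat -> T,
    (forall e : R, 0 < e -> exists N : nat, forall m n : nat,
        (N <= m)%N -> (N <= n)%N -> d (u m) (u n) < e) ->
    exists l : T, (fun n => d (u n) l) @ \oo --> (0 : R).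

Definition metric_separable {R : realType} {T : Type} (d : T -> T -> R) : Prop :=
  exists s : nat -> T, forall (x : T) (e : R), 0 < e -> exists n, d x (s n) < e.

Definition metric_open {R : realType} {T : Type} (d : T -> T -> R) (A : set T) : Prop :=
  forall x, A x -> exists e : R, 0 < e /\ forall y, d x y < e -> A y.

Definition borel_of {R : realType} {dT : measure_display} {T : measurableType dT}
  (d : T -> T -> R) : Prop :=
  (@measurable dT T) = <<s metric_open d >>.

Definition msd_h {R : realType} {T : Type} (d : T -> T -> R) (x1 x2 x3 : T) : R :=
  if pselect (x3 = x1 \/ x3 = x2) then 0
  else ((d x1 x3) ^+ 2 + (d x2 x3) ^+ 2 - (d x1 x2) ^+ 2) / (d x1 x3 * d x2 x3).

(* Metric spatial depth D(mu; P) = 1 - 1/2 E[h(X1, X2, mu)],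
   X1, X2 iid ~ P, i.e. the expectation is w.r.t. the product measure P x P. *)
Definition msdepth {R : realType} {dT : measure_display} {T : measurableType dT}
  (d : T -> T -> R) (P : probability T R) (mu : T) : \bar R :=
  (1%:E - (2^-1)%:E * \int[(P \x P)%E]_z (msd_h d z.1 z.2 mu)%:E)%E.

From HB Require Import structures.
From mathcomp Require Import all_boot all_order all_algebra.
From mathcomp Require Import all_classical all_reals all_analysis.
From mathcomp Require Import lra measurable_realfun.
Import Order.TTheory GRing.Theory Num.Theory.
Import numFieldNormedType.Exports.
Local Open Scope classical_set_scope.
Local Open Scope ring_scope.
Set Implicit Arguments. Unset Strict Implicit.

(* The proof is an application of dominated convergence to the kernel
   h(x1, x2, .) under the product measure P x P:
   - h is bounded: |h| <= 2 everywhere, since by the triangle inequality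
     |d(x1,x3)^2 + d(x2,x3)^2 - d(x1,x2)^2| <= 2 d(x1,x3) d(x2,x3);
   - h(x1, x2, mu_n) --> h(x1, x2, mu) whenever x1 <> mu and x2 <> mu, because
     h is then a rational expression in distances with non-vanishing
     denominator, and distances depend continuously on their arguments;
   - the exceptional set {x1 = mu} u {x2 = mu} is (P x P)-null as P{mu} = 0;
   - h(., ., m) is measurable for the Borel sigma-algebra: distances to a
     point are measurable because balls are open, and the distance on pairs
     is measurable thanks to separability: {d(x, y) < r} is a countable
     union of products of balls around the points of a dense sequence. *)

Section Kernel.
Variables (R : realType) (T : Type) (d : T -> T -> R) (hd : is_metric d).

(* The indicator in the definition of h is superfluous: when x3 is x1 or x2
   the denominator vanishes, and division by zero yields zero. *)
Lemma msd_hE x y z : msd_h d x y z =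
  ((d x z) ^+ 2 + (d y z) ^+ 2 - (d x y) ^+ 2) / (d x z * d y z).
Proof.
have [_ d_eq0 _ _] := hd.
rewrite /msd_h; case: pselect => [[] e|//] /=; rewrite e.
  by rewrite (proj2 (d_eq0 x x)) // mul0r invr0 mulr0.
by rewrite (proj2 (d_eq0 y y)) // mulr0 invr0 mulr0.
Qed.

Lemma msd_h_bound x y z : `|msd_h d x y z| <= 2.
Proof.
rewrite msd_hE; have [d_ge0 _ dC d_tri] := hd.
set a := d x z; set b := d y z; set c := d x y.
have a0 : 0 <= a by apply: d_ge0.
have b0 : 0 <= b by apply: d_ge0.
have c_le : c <= a + b by rewrite /c /a /b (dC y z); apply: d_tri.
have a_le : a <= c + b by apply: d_tri.
have b_le : b <= c + a by rewrite /c /a /b (dC x y); apply: d_tri.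
have [->|ab0] := eqVneq (a * b) 0; first by rewrite invr0 mulr0 normr0.
have ab_gt0 : 0 < a * b by rewrite lt0r ab0 mulr_ge0.
rewrite normrM normfV (gtr0_norm ab_gt0) ler_pdivrMr //.
by rewrite ler_norml; apply/andP; split; nra.
Qed.

Variables (mu : T) (mu_ : nat -> T).
Hypothesis hmu : (fun n => d (mu_ n) mu) @ \oo --> (0 : R).

Lemma dist_cvg x : (fun n => d x (mu_ n)) @ \oo --> d x mu.
Proof.
have [_ _ dC d_tri] := hd.
apply: (@squeeze_cvgr _ _ _ _ (fun n => d x mu - d (mu_ n) mu)
  (fun n => d x mu + d (mu_ n) mu)).
- apply: nearW => n; apply/andP; split.
    by have := d_tri x (mu_ n) mu; lra.
  by have := d_tri x mu (mu_ n); rewrite (dC mu (mu_ n)); lra.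
- by rewrite -[X in _ --> X]subr0; apply: cvgB => //; exact: cvg_cst.
- by rewrite -[X in _ --> X]addr0; apply: cvgD => //; exact: cvg_cst.
Qed.

Lemma msd_h_cvg x y : x <> mu -> y <> mu ->
  (fun n => msd_h d x y (mu_ n)) @ \oo --> msd_h d x y mu.
Proof.
move=> xmu ymu; have [_ d_eq0 _ _] := hd.
rewrite msd_hE; under eq_fun do rewrite msd_hE.
have dx := @dist_cvg x; have dy := @dist_cvg y.
apply: cvgM.
  apply: cvgB; last exact: cvg_cst.
  by rewrite !expr2; apply: cvgD; apply: cvgM.
apply: cvgV; last exact: cvgM.
by rewrite mulf_neq0 //; apply/eqP => /d_eq0.
Qed.
End Kernel.

Lemma measurable_fun_sublevels (R : realType) dT' (T' : measurableType dT')
  (f : T' -> R) :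
  (forall r, measurable [set x | f x < r]) -> measurable_fun setT f.
Proof.
move=> f_lt; apply: (measurability _ (RGenInftyO.measurableE R)) => //.
move=> _ [_ [r ->] <-]; rewrite setTI.
suff -> : f @^-1` `]-oo, r[ = [set x | f x < r] by [].
by apply/seteqP; split => x /=; rewrite in_itv.
Qed.

Lemma measurable_sublevel (R : realType) dT' (T' : measurableType dT')
  (f : T' -> R) r :
  measurable_fun setT f -> measurable [set x | f x < r].
Proof.
move=> mf; have := mf measurableT _ (measurable_itv `]-oo, r[).
by rewrite setTI; congr measurable; apply/seteqP; split => x /=; rewrite in_itv.
Qed.

(* The total inverse x |-> x^-1 (with 0^-1 = 0) is Borel measurable:
   it is continuous off the closed set {0}. *)
Lemma measurable_inv (R : realType) : measurable_fun setT (@GRing.inv R).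
Proof.
rewrite -(setvU [set 0 : R]).
apply/measurable_funU => //; first exact: measurableC.
split; last exact: measurable_fun_set1.
apply: open_continuous_measurable_fun.
  exact/closed_openC/accessible_closed_set1/hausdorff_accessible/Rhausdorff.
by move=> x; rewrite inE /= => /eqP x0; apply: inv_continuous.
Qed.

Section Measurability.
Variables (R : realType) (dT : measure_display) (T : measurableType dT)
  (d : T -> T -> R) (hd : is_metric d) (hsep : metric_separable d)
  (hborel : borel_of d).

Lemma measurable_ball m r : measurable [set x | d x m < r].
Proof.
have -> : @measurable _ T = _ := hborel.
apply: sub_sigma_algebra => x /= xr.
exists (r - d x m); split; first by rewrite subr_gt0.
have [_ _ dC d_tri] := hd.
by move=> y xy; have := d_tri y x m; rewrite (dC y x); lra.
Qed.

Lemma measurable_dist_to m : measurable_fun setT (fun x => d x m).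
Proof. by apply: measurable_fun_sublevels => r; exact: measurable_ball. Qed.

(* {d(x, y) < r} is the countable union over the dense sequence s of the
   sets {d(x, s n) + d(y, s n) < r}. *)
Lemma measurable_dist : measurable_fun setT (fun z : T * T => d z.1 z.2).
Proof.
have [s s_dense] := hsep; have [_ _ dC d_tri] := hd.
apply: measurable_fun_sublevels => r.
have -> : [set z : T * T | d z.1 z.2 < r] =
    \bigcup_n [set z : T * T | d z.1 (s n) + d z.2 (s n) < r].
  apply/seteqP; split => [z /= zr|z [n _ /=]].
    have e_gt0 : 0 < (r - d z.1 z.2) / 2 by rewrite divr_gt0 // subr_gt0.
    have [n hn] := s_dense z.2 _ e_gt0.
    by exists n => //=; have := d_tri z.1 z.2 (s n); lra.
  by have := d_tri z.1 (s n) z.2; rewrite (dC (s n) z.2); lra.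
apply: bigcupT_measurable => n; apply: measurable_sublevel.
apply: measurable_funD.
  exact: measurableT_comp (measurable_dist_to _) measurable_fst.
exact: measurableT_comp (measurable_dist_to _) measurable_snd.
Qed.

(* Points are Borel sets: {m} = {x | d(x, m) = 0}. *)
Lemma measurable_point (m : T) : measurable [set m].
Proof.
have := measurable_dist_to m measurableT (measurable_set1 (0 : R)).
have [_ d_eq0 _ _] := hd.
rewrite setTI; congr measurable; apply/seteqP; split => y /=.
  exact: (proj1 (d_eq0 y m)).
by move=> ->; apply/(d_eq0 m m).
Qed.

Lemma measurable_msd_h m :
  measurable_fun setT (fun z : T * T => msd_h d z.1 z.2 m).
Proof.
rewrite (_ : (fun z : T * T => _) = fun z =>
   (d z.1 m ^+ 2 + d z.2 m ^+ 2 - d z.1 z.2 ^+ 2) * (d z.1 m * d z.2 m)^-1).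
  2: by apply/funext => z; rewrite msd_hE.
have m1 : measurable_fun setT (fun z : T * T => d z.1 m).
  exact: measurableT_comp (measurable_dist_to _) measurable_fst.
have m2 : measurable_fun setT (fun z : T * T => d z.2 m).
  exact: measurableT_comp (measurable_dist_to _) measurable_snd.
apply: measurable_funM.
  apply: measurable_funB; last exact: measurable_funX measurable_dist.
  by apply: measurable_funD; exact: measurable_funX.
by apply: measurableT_comp (@measurable_inv R) _; exact: measurable_funM.
Qed.
End Measurability.

Definition hits {T : Type} (m : T) : set (T * T) :=
  [set m] `*` [set: T] `|` [set: T] `*` [set m].

Lemma product_hits_null (R : realType) dT (T : measurableType dT)
  (P : probability T R) (m : T) :
  measurable [set m] -> P [set m] = 0%E -> (P \x P)%E (hits m) = 0%E.
Proof.
move=> mm Pm; apply: null_set_setU; try exact: measurableX.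
- transitivity (P [set m] * P setT)%E; first exact: product_measure1E.
  by rewrite Pm mul0e.
- transitivity (P setT * P [set m])%E; first exact: product_measure1E.
  by rewrite Pm mule0.
Qed.

Section Expectation.
Variables (R : realType) (dT : measure_display) (T : measurableType dT)
  (d : T -> T -> R) (hd : is_metric d) (hsep : metric_separable d)
  (hborel : borel_of d) (P : probability T R).

Let measurable_msd_hE m :
  measurable_fun setT (fun z : T * T => (msd_h d z.1 z.2 m)%:E).
Proof. by apply/measurable_EFinP; exact: measurable_msd_h. Qed.

Let integrable_bound : (P \x P)%E.-integrable setT (EFin \o cst (2 : R)).
Proof.
exact: (finite_measure_integrable_cst (P \x P : probability _ R)%E 2 measurableT).
Qed.

(* h(X1, X2, m) is integrable, so the depth D(m; P) is a real number. *)
Lemma integrable_msd_h m :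
  (P \x P)%E.-integrable setT (fun z : T * T => (msd_h d z.1 z.2 m)%:E).
Proof.
apply: (le_integrable measurableT (measurable_msd_hE m)) integrable_bound.
move=> z _; rewrite /= lee_fin [`|2|]ger0_norm //; exact: msd_h_bound.
Qed.

Variables (mu : T) (mu_ : nat -> T).
Hypotheses (hP : P [set mu] = 0%E)
  (hmu : (fun n => d (mu_ n) mu) @ \oo --> (0 : R)).

Lemma expectation_msd_h_cvg :
  ((fun n => \int[P \x P]_z (msd_h d z.1 z.2 (mu_ n))%:E) @ \oo -->
    \int[P \x P]_z (msd_h d z.1 z.2 mu)%:E)%E.
Proof.
have m_mu := measurable_point hd hborel mu.
have pointwise : {ae (P \x P)%E, forall z, setT z ->
    (fun n => (msd_h d z.1 z.2 (mu_ n))%:E) @ \oo --> (msd_h d z.1 z.2 mu)%:E}.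
  exists (hits mu); split.
  - by apply: measurableU; apply: measurableX.
  - exact: product_hits_null m_mu hP.
  - move=> z /= not_cvg; apply: contrapT => z_off; apply: not_cvg => _.
    apply/cvg_EFin; first exact: nearW.
    by apply: (msd_h_cvg hd hmu) => z_mu; apply: z_off;
      rewrite /hits -z_mu; [left|right].
have dominated : {ae (P \x P)%E, forall z n, setT z ->
    (`|(msd_h d z.1 z.2 (mu_ n))%:E| <= (EFin \o cst 2%R) z)%E}.
  by apply: nearW => z n _; rewrite lee_fin; exact: msd_h_bound.
by have [_ _] := dominated_convergence measurableT
  (fun n => measurable_msd_hE (mu_ n)) (measurable_msd_hE mu)
  pointwise integrable_bound dominated.
Qed.
End Expectation.

Unset Implicit Arguments. Set Strict Implicit.

Theorem theorem6 (R : realType) (dT : measure_display) (T : measurableType dT)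
  (d : T -> T -> R)
  (hd : is_metric d) (hcomp : metric_complete d) (hsep : metric_separable d)
  (hborel : borel_of d)
  (P : probability T R) (mu : T) (hP : P [set mu] = 0%E)
  (mu_ : nat -> T) (hmu : (fun n => d (mu_ n) mu) @ \oo --> (0 : R)) :
  (fun n => msdepth d P (mu_ n)) @ \oo --> msdepth d P mu.
Proof.
have fin_expectation := integrable_fin_num measurableT
  (integrable_msd_h hd hsep hborel P mu).
rewrite /msdepth; apply: cvgeB.
- by rewrite fin_num_adde_defr // fin_numN fin_numM.
- exact: cvg_cst.
- exact/cvgeZl/(expectation_msd_h_cvg hd hsep hborel hP hmu).
Qed.
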